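(* For the unstructured search problem with marked set $M$, $1\le |M|<2^n$, $$\dim(\mathfrak g_{\mathrm{QWOA,Search}})=\begin{cases}4,& |M|=1,\\ 5,&\text{otherwise.}\end{cases}$$
   Context: Unstructured search: solution space $\mathcal S=\{0,1\}^n$, cost $C:\mathcal S\to\{0,1\}$, marked set $M=\{z:C(z)=1\}$. $H_C$ is the diagonal matrix with $H_C|z\rangle=C(z)|z\rangle$ (projector onto marked basis states); $H_M$ is the $2^n\times 2^n$ all-ones matrix. $\mathfrak g_{\mathrm{QWOA,Search}}$ is the real Lie algebra generated by $iH_C$ and $iH_M$, i.e. the smallest real linear subspace of $2^n\times 2^n$ complex matrices containing them and closed under the commutator $[A,B]=AB-BA$; its dimension is its real dimension. *)

From HB Require Import structures.
From mathcomp Require Import all_boot all_order all_algebra.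
From mathcomp Require Import complex.
Set Implicit Arguments. Unset Strict Implicit. Unset Printing Implicit Defensive.
Import Order.TTheory GRing.Theory Num.Theory.
Local Open Scope ring_scope.

Section LieDefs.
Variable R : rcfType.
Variable N : nat.
Local Notation M := 'M[R[i]]_N.

Definition commutator (A B : M) : M := A *m B - B *m A.

Definition rscale (r : R) (A : M) : M := (Complex r 0) *: A.

Definition real_lie_subalgebra (S : M -> Prop) : Prop :=
  [/\ S 0,
      (forall A B, S A -> S B -> S (A + B)),
      (forall (r : R) A, S A -> S (rscale r A)) &
      (forall A B, S A -> S B -> S (commutator A B))].

Definition lie_generated (gens : seq M) (X : M) : Prop :=
  forall S : M -> Prop, real_lie_subalgebra S ->
    (forall G, G \in gens -> S G) -> S X.

Definition rcomb (d : nat) (c : 'I_d -> R) (b : 'I_d -> M) : M :=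
  \sum_(k < d) rscale (c k) (b k).

Definition real_dim_eq (S : M -> Prop) (d : nat) : Prop :=
  exists b : 'I_d -> M,
    [/\ (forall k, S (b k)),
        (forall c : 'I_d -> R, rcomb c b = 0 -> forall k, c k = 0) &
        (forall X, S X -> exists c : 'I_d -> R, X = rcomb c b)].

End LieDefs.

(* Unstructured search on n qubits: the solution space {0,1}^n is
   encoded as 'I_(2^n) (bit strings <-> their binary value). *)
Unset Implicit Arguments.
Definition imag_unit (R : rcfType) : R[i] := Complex 0 1.

Definition H_C (R : rcfType) (n : nat) (Mk : {set 'I_(2 ^ n)}) : 'M[R[i]]_(2 ^ n) :=
  \matrix_(i, j) (if (i == j) && (i \in Mk) then 1 else 0).

Definition H_M (R : rcfType) (n : nat) : 'M[R[i]]_(2 ^ n) :=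
  \matrix_(i, j) 1.

Definition g_QWOA_Search (R : rcfType) (n : nat) (Mk : {set 'I_(2 ^ n)}) :
  'M[R[i]]_(2 ^ n) -> Prop :=
  lie_generated [:: imag_unit R *: H_C R n Mk; imag_unit R *: H_M R n].

From mathcomp Require Import all_boot all_order all_algebra.
From mathcomp Require Import complex.
From mathcomp Require Import ring lra zify.
Set Implicit Arguments. Unset Strict Implicit. Unset Printing Implicit Defensive.
Import Order.TTheory GRing.Theory Num.Theory.
Local Open Scope ring_scope.
Local Open Scope complex_scope.

(* The projector H_C and the all-ones matrix H_M are constant on the four blocks
   cut out by the marked set M and its complement, up to a multiple of the
   identity on the M x M block.  Such block-constant matrices are closed under
   products, and the anti-Hermitian ones form a real Lie algebra of dimension 5:
   an imaginary constant on each diagonal block, an imaginary multiple of the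
   identity on M x M, and one complex constant on the off-diagonal blocks.  It
   contains iH_C and iH_M, hence g; conversely iH_C, iH_M and three iterated
   commutators of them span it.  The five parameters are read off from entries,
   which needs two points of M and one outside it; when |M| = 1 the identity on
   M x M is its all-ones block, so the dimension drops to 4. *)

Section LieGenerated.
Variables (R : rcfType) (N : nat) (gens : seq 'M[R[i]]_N).

Lemma lie_generated_gen A : A \in gens -> lie_generated gens A.
Proof. by move=> gA S _; apply. Qed.

Lemma lie_generated0 : lie_generated gens 0.
Proof. by move=> S [S0 _ _ _]. Qed.

Lemma lie_generatedD A B :
  lie_generated gens A -> lie_generated gens B -> lie_generated gens (A + B).
Proof.
by move=> gA gB S hS Sg; case: (hS) => _ SD _ _; apply: SD; [apply: gA | apply: gB].
Qed.

Lemma lie_generatedZ r A : lie_generated gens A -> lie_generated gens (rscale r A).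
Proof. by move=> gA S hS Sg; case: (hS) => _ _ SZ _; apply: SZ; apply: gA. Qed.

Lemma lie_generatedN A : lie_generated gens A -> lie_generated gens (- A).
Proof.
have -> : - A = rscale (-1) A.
  by rewrite /rscale -scaleN1r; congr (_ *: _); apply/eqP; rewrite eq_complex /= oppr0 !eqxx.
exact: lie_generatedZ.
Qed.

Lemma lie_generated_commutator A B :
  lie_generated gens A -> lie_generated gens B -> lie_generated gens (commutator A B).
Proof.
by move=> gA gB S hS Sg; case: (hS) => _ _ _ SC; apply: SC; [apply: gA | apply: gB].
Qed.

End LieGenerated.

Lemma complex_eq0 (R : rcfType) (x y : R) : x +i* y = 0 -> x = 0 /\ y = 0.
Proof. by move/eqP; rewrite eq_complex /= => /andP[/eqP-> /eqP->]. Qed.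

Lemma conjcN_Re0 (R : rcfType) (x y : R) : (x +i* y)^* = - (x +i* y) -> x = 0.
Proof. by move/eqP; rewrite eq_complex /= => /andP[/eqP ? _]; lra. Qed.

Lemma conjc_i (R : rcfType) : 'i^* = - 'i :> R[i].
Proof. by apply/eqP; rewrite eq_complex /= oppr0 !eqxx. Qed.

Section BlockConstant.
Variables (R : rcfType) (N : nat) (Mk : {set 'I_N}).
Local Notation C := R[i].
Local Notation m := (#|Mk|%:R : C).
Local Notation k := (#|~: Mk|%:R : C).

(* [bcmx a b c d e] is the block matrix [[a J + e I, b J], [c J, d J]] with
   respect to the partition of the indices into Mk and its complement, where J
   is an all-ones block. *)
Definition bcmx (a b c d e : C) : 'M[C]_N :=
  \matrix_(i, j) if i \in Mk then (if j \in Mk then a + (i == j)%:R * e else b)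
                 else (if j \in Mk then c else d).

Lemma sum_in_delta (i : 'I_N) (F : 'I_N -> C) :
  i \in Mk -> \sum_(l in Mk) (i == l)%:R * F l = F i.
Proof.
move=> Mi; rewrite (bigD1 i) //= eqxx mul1r big1 ?addr0 // => l /andP[_ nli].
by rewrite eq_sym (negbTE nli) mul0r.
Qed.

Lemma sum_in_delta_r (j : 'I_N) (F : 'I_N -> C) :
  j \in Mk -> \sum_(l in Mk) (l == j)%:R * F l = F j.
Proof. by move=> Mj; rewrite -(sum_in_delta F Mj); apply: eq_bigr => l _; rewrite eq_sym. Qed.

Lemma sum_in_const (x : C) : \sum_(l in Mk) x = m * x.
Proof. by rewrite sumr_const mulr_natl. Qed.

Lemma sum_notin_const (x : C) : \sum_(l | l \notin Mk) x = k * x.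
Proof.
by rewrite sumr_const mulr_natl; congr (_ *+ _); apply: eq_card => l; rewrite !inE.
Qed.

Lemma bcmx_mul a b c d e a' b' c' d' e' :
  bcmx a b c d e *m bcmx a' b' c' d' e' =
  bcmx (m * a * a' + a * e' + e * a' + k * b * c')
       (m * a * b' + e * b' + k * b * d')
       (m * c * a' + c * e' + k * d * c')
       (m * c * b' + k * d * d') (e * e').
Proof.
apply/matrixP => i j; rewrite !mxE (bigID (fun l => l \in Mk)) /=.
have out_Mk l : l \notin Mk -> bcmx a b c d e i l * bcmx a' b' c' d' e' l j =
    (if i \in Mk then b else d) * (if j \in Mk then c' else d').
  by move=> nMl; rewrite !mxE (negbTE nMl); case: (i \in Mk); case: (j \in Mk).
rewrite (eq_bigr _ out_Mk) sum_notin_const.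
case Mi: (i \in Mk); case Mj: (j \in Mk).
- rewrite (eq_bigr (fun l => a * a' + (i == l)%:R * (e * a') + (l == j)%:R * (a * e')
      + (i == l)%:R * ((l == j)%:R * (e * e')))); last first.
    by move=> l Ml; rewrite !mxE Mi Mj Ml; ring.
  by rewrite !big_split /= sum_in_delta // sum_in_delta_r // sum_in_delta // sum_in_const; ring.
- rewrite (eq_bigr (fun l => a * b' + (i == l)%:R * (e * b'))); last first.
    by move=> l Ml; rewrite !mxE Mi Mj Ml; ring.
  by rewrite big_split /= sum_in_delta // sum_in_const; ring.
- rewrite (eq_bigr (fun l => c * a' + (l == j)%:R * (c * e'))); last first.
    by move=> l Ml; rewrite !mxE Mi Mj Ml; ring.
  by rewrite big_split /= sum_in_delta_r // sum_in_const; ring.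
- rewrite (eq_bigr (fun l => c * b')); first by rewrite sum_in_const; ring.
  by move=> l Ml; rewrite !mxE Mi Mj Ml.
Qed.

Lemma bcmx0 : bcmx 0 0 0 0 0 = 0.
Proof. by apply/matrixP => i j; rewrite !mxE mulr0 addr0; case: ifP; case: ifP. Qed.

Lemma bcmxD a b c d e a' b' c' d' e' :
  bcmx a b c d e + bcmx a' b' c' d' e' =
  bcmx (a + a') (b + b') (c + c') (d + d') (e + e').
Proof.
by apply/matrixP => i j; rewrite !mxE; case: (i \in Mk); case: (j \in Mk); rewrite //; ring.
Qed.

Lemma bcmxZ z a b c d e : z *: bcmx a b c d e = bcmx (z * a) (z * b) (z * c) (z * d) (z * e).
Proof.
by apply/matrixP => i j; rewrite !mxE; case: (i \in Mk); case: (j \in Mk); rewrite //; ring.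
Qed.

Lemma bcmxN a b c d e : - bcmx a b c d e = bcmx (- a) (- b) (- c) (- d) (- e).
Proof. by rewrite -scaleN1r bcmxZ !mulN1r. Qed.

Lemma bcmx_commutator a b c d e a' b' c' d' e' :
  commutator (bcmx a b c d e) (bcmx a' b' c' d' e') =
  bcmx (k * (b * c' - b' * c))
       (m * (a * b' - a' * b) + (e * b' - e' * b) + k * (b * d' - b' * d))
       (m * (c * a' - c' * a) + (c * e' - c' * e) + k * (d * c' - d' * c))
       (m * (c * b' - c' * b)) 0.
Proof. by rewrite /commutator !bcmx_mul bcmxN bcmxD; congr bcmx; ring. Qed.

Definition skew_bcmx (X : 'M[C]_N) : Prop :=
  exists a b d e, X = bcmx a b (- conjc b) d e /\
    [/\ conjc a = - a, conjc d = - d & conjc e = - e].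

Lemma skew_bcmxP a b c d e :
  c = - conjc b -> conjc a = - a -> conjc d = - d -> conjc e = - e ->
  skew_bcmx (bcmx a b c d e).
Proof. by move=> -> ha hd he; exists a, b, d, e. Qed.

Lemma skew_bcmx_lie : real_lie_subalgebra skew_bcmx.
Proof.
split.
- by rewrite -bcmx0; apply: skew_bcmxP; rewrite conjc0 oppr0.
- move=> _ _ [a [b [d [e [-> [ha hd he]]]]]] [a' [b' [d' [e' [-> [ha' hd' he']]]]]].
  by rewrite bcmxD; apply: skew_bcmxP; rewrite !rmorphD /= ?ha ?hd ?he ?ha' ?hd' ?he' ?opprD.
- move=> r _ [a [b [d [e [-> [ha hd he]]]]]].
  by rewrite /rscale bcmxZ; apply: skew_bcmxP; rewrite !rmorphM /= oppr0 ?ha ?hd ?he ?mulrN.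
- move=> _ _ [a [b [d [e [-> [ha hd he]]]]]] [a' [b' [d' [e' [-> [ha' hd' he']]]]]].
  rewrite bcmx_commutator; apply: skew_bcmxP;
    rewrite ?conjc0 ?oppr0 // !(rmorphB, rmorphD, rmorphM, rmorphN) /=
            !(conjc_nat, conjcK, ha, hd, he, ha', hd', he'); ring.
Qed.

Lemma bcmx_eq0 a b c d e x z :
  bcmx a b c d e = 0 -> x \in Mk -> z \notin Mk -> [/\ a + e = 0, b = 0, c = 0 & d = 0].
Proof.
move=> X0 Mx nMz; have entry0 i j : bcmx a b c d e i j = 0 by rewrite X0 mxE.
move: (entry0 x x) (entry0 x z) (entry0 z x) (entry0 z z).
by rewrite !mxE Mx (negbTE nMz) eqxx mul1r.
Qed.

Lemma bcmx_eq0_offdiag a b c d e x y :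
  bcmx a b c d e = 0 -> x \in Mk -> y \in Mk -> x != y -> a = 0.
Proof.
move=> X0 Mx My nxy; have := congr1 (fun X : 'M[C]_N => X x y) X0.
by rewrite /= !mxE Mx My (negbTE nxy) mul0r addr0.
Qed.

Lemma bcmx_card1 a b c d e : #|Mk| = 1%N -> bcmx a b c d e = bcmx (a + e) b c d 0.
Proof.
move/eqP/cards1P => [x Mkx]; apply/matrixP => i j; rewrite !mxE Mkx !inE.
by case: eqP => ix; case: eqP => jx //; subst; rewrite ?eqxx ?mul1r ?mulr0 ?addr0.
Qed.

Definition bcmx_basis : seq 'M[C]_N :=
  [:: bcmx 'i 0 0 0 0; bcmx 0 0 0 'i 0; bcmx 0 'i 'i 0 0; bcmx 0 (-1) 1 0 0; bcmx 0 0 0 0 'i].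

Lemma rcomb_bcmx_basis5 (r : 'I_5 -> R) :
  rcomb r (fun j : 'I_5 => bcmx_basis`_j) =
  bcmx (r (inord 0))*i (- r (inord 3) +i* r (inord 2)) (r (inord 3) +i* r (inord 2))
       (r (inord 1))*i (r (inord 4))*i.
Proof.
rewrite /rcomb (eq_bigr (fun j : 'I_5 => rscale (r (inord j)) (bcmx_basis`_j))); last first.
  by move=> j _; rewrite inord_val.
rewrite !big_ord_recl big_ord0 addr0 /rscale !bcmxZ !bcmxD.
by congr bcmx; simpc.
Qed.

Lemma rcomb_bcmx_basis4 (r : 'I_4 -> R) :
  rcomb r (fun j : 'I_4 => bcmx_basis`_j) =
  bcmx (r (inord 0))*i (- r (inord 3) +i* r (inord 2)) (r (inord 3) +i* r (inord 2))
       (r (inord 1))*i 0.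
Proof.
rewrite /rcomb (eq_bigr (fun j : 'I_4 => rscale (r (inord j)) (bcmx_basis`_j))); last first.
  by move=> j _; rewrite inord_val.
rewrite !big_ord_recl big_ord0 addr0 /rscale !bcmxZ !bcmxD.
by congr bcmx; simpc.
Qed.

Lemma bcmx_basis5_free x y z : x \in Mk -> y \in Mk -> x != y -> z \notin Mk ->
  forall r : 'I_5 -> R, rcomb r (fun j : 'I_5 => bcmx_basis`_j) = 0 -> forall j, r j = 0.
Proof.
move=> Mx My nxy nMz r; rewrite rcomb_bcmx_basis5 => X0 j.
have a0 := bcmx_eq0_offdiag X0 Mx My nxy.
have [] := bcmx_eq0 X0 Mx nMz; rewrite a0 add0r.
move: a0 => /complex_eq0[_ r0] /complex_eq0[_ r4] /complex_eq0[r3 r2] _ /complex_eq0[_ r1].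
by rewrite -(inord_val j); case: j => [[|[|[|[|[|j]]]]] ?] //=; lra.
Qed.

Lemma bcmx_basis4_free x z : x \in Mk -> z \notin Mk ->
  forall r : 'I_4 -> R, rcomb r (fun j : 'I_4 => bcmx_basis`_j) = 0 -> forall j, r j = 0.
Proof.
move=> Mx nMz r; rewrite rcomb_bcmx_basis4 => X0 j.
have [] := bcmx_eq0 X0 Mx nMz; rewrite addr0.
move=> /complex_eq0[_ r0] /complex_eq0[r3 r2] _ /complex_eq0[_ r1].
by rewrite -(inord_val j); case: j => [[|[|[|[|j]]]] ?] //=; lra.
Qed.

Lemma skew_bcmx_span5 X :
  skew_bcmx X -> exists r : 'I_5 -> R, X = rcomb r (fun j : 'I_5 => bcmx_basis`_j).
Proof.
move=> [[ar ai] [[br bi] [[dr di] [[er ei] [-> []]]]]].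
move=> /conjcN_Re0-> /conjcN_Re0-> /conjcN_Re0->.
exists (fun j => nth 0 [:: ai; di; bi; - br; ei] j).
by rewrite rcomb_bcmx_basis5 !inordK //=; congr bcmx; simpc.
Qed.

Lemma skew_bcmx_span4 X : #|Mk| = 1%N -> skew_bcmx X ->
  exists r : 'I_4 -> R, X = rcomb r (fun j : 'I_4 => bcmx_basis`_j).
Proof.
move=> Mk1 [[ar ai] [[br bi] [[dr di] [[er ei] [-> []]]]]].
move=> /conjcN_Re0-> /conjcN_Re0-> /conjcN_Re0->.
exists (fun j => nth 0 [:: ai + ei; di; bi; - br] j).
by rewrite bcmx_card1 // rcomb_bcmx_basis4 !inordK //=; congr bcmx; simpc.
Qed.

Lemma commutator_bcmx_diag_ones :
  commutator (bcmx 0 0 0 0 'i) (bcmx 'i 'i 'i 'i 0) = bcmx 0 (-1) 1 0 0.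
Proof.
have ii : 'i * 'i = -1 :> C by rewrite -expr2 sqr_i.
by rewrite bcmx_commutator; congr bcmx;
  rewrite ?(mulr0, mul0r, subrr, subr0, sub0r, ii, opprK, oppr0, addr0, add0r).
Qed.

End BlockConstant.

Arguments bcmx_basis {R N} Mk.

Section Search.
Variables (R : rcfType) (n : nat) (Mk : {set 'I_(2 ^ n)}).
Local Notation g := (g_QWOA_Search R n Mk).
Local Notation bcmx := (@bcmx R (2 ^ n) Mk).
Local Notation iH_C := (bcmx 0 0 0 0 'i).
Local Notation iH_M := (bcmx 'i 'i 'i 'i 0).

Lemma iH_C_bcmx : imag_unit R *: H_C R n Mk = iH_C.
Proof.
apply/matrixP => i j; rewrite !mxE.
case Mi: (i \in Mk); case Mj: (j \in Mk); rewrite ?andbT ?andbF ?mulr0 //.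
  by rewrite add0r; case: eqP; rewrite ?mulr1 ?mul1r ?mul0r ?mulr0.
by case: eqP => [ij|]; rewrite ?mulr0 //; move: Mi Mj; rewrite ij => ->.
Qed.

Lemma iH_M_bcmx : imag_unit R *: H_M R n = iH_M.
Proof.
apply/matrixP => i j; rewrite !mxE.
by case: (i \in Mk); case: (j \in Mk); rewrite ?mulr0 ?addr0 mulr1.
Qed.

Lemma g_QWOA_Search_iH_C : g iH_C.
Proof. by rewrite -iH_C_bcmx; apply: lie_generated_gen; rewrite inE eqxx. Qed.

Lemma g_QWOA_Search_iH_M : g iH_M.
Proof. by rewrite -iH_M_bcmx; apply: lie_generated_gen; rewrite !inE eqxx orbT. Qed.

Lemma g_QWOA_Search_skew X : g X -> skew_bcmx Mk X.
Proof.
move=> gX; apply: gX; first exact: skew_bcmx_lie.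
move=> G; rewrite !inE => /orP[/eqP-> | /eqP->]; [rewrite iH_C_bcmx | rewrite iH_M_bcmx].
all: by apply: skew_bcmxP; rewrite ?conjc0 ?conjc_i ?oppr0 ?opprK.
Qed.

Lemma g_QWOA_Search_offdiag : g (bcmx 0 (-1) 1 0 0).
Proof.
rewrite -commutator_bcmx_diag_ones.
exact: lie_generated_commutator g_QWOA_Search_iH_C g_QWOA_Search_iH_M.
Qed.

Lemma g_QWOA_Search_ioffdiag : g (bcmx 0 'i 'i 0 0).
Proof.
have -> : bcmx 0 'i 'i 0 0 = - commutator iH_C (bcmx 0 (-1) 1 0 0).
  by rewrite bcmx_commutator bcmxN; congr bcmx; ring.
exact: lie_generatedN (lie_generated_commutator g_QWOA_Search_iH_C g_QWOA_Search_offdiag).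
Qed.

Lemma g_QWOA_Search_marked : g (bcmx 'i 0 0 0 0).
Proof.
pose N := (2 ^ n)%N.
have card_split : #|Mk|%:R + #|~: Mk|%:R = N%:R :> R[i].
  by rewrite -natrD cardsC card_ord.
have N_neq0 : N%:R != 0 :> R[i] by rewrite pnatr_eq0 expn_eq0.
(* With X = [iH_C, iH_M], the matrix equal to 'i on M x M and 0 elsewhere is
   (2|M| iH_M + [iH_M, X] + N [iH_C, X]) / 2N, using |M| + |~: M| = N. *)
have -> : bcmx 'i 0 0 0 0 = rscale (2 * N%:R)^-1 (rscale (2 * #|Mk|%:R) iH_M
    + commutator iH_M (bcmx 0 (-1) 1 0 0) - rscale N%:R (bcmx 0 'i 'i 0 0)).
  rewrite bcmx_commutator /rscale !complexr0 !bcmxZ bcmxN !bcmxD bcmxZ.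
  rewrite !(fmorphV, rmorphM, rmorph_nat) -card_split in N_neq0 *.
  by congr bcmx; field.
apply: lie_generatedZ; apply: lie_generatedD; first apply: lie_generatedD.
- exact: lie_generatedZ _ g_QWOA_Search_iH_M.
- exact: lie_generated_commutator g_QWOA_Search_iH_M g_QWOA_Search_offdiag.
- exact: lie_generatedN (lie_generatedZ _ g_QWOA_Search_ioffdiag).
Qed.

Lemma g_QWOA_Search_unmarked : g (bcmx 0 0 0 'i 0).
Proof.
have -> : bcmx 0 0 0 'i 0 = iH_M - bcmx 'i 0 0 0 0 - bcmx 0 'i 'i 0 0.
  by rewrite !bcmxN !bcmxD; congr bcmx; ring.
apply: lie_generatedD; first apply: lie_generatedD.
- exact: g_QWOA_Search_iH_M.
- exact: lie_generatedN g_QWOA_Search_marked.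
- exact: lie_generatedN g_QWOA_Search_ioffdiag.
Qed.

Lemma g_QWOA_Search_basis j : g (bcmx_basis Mk)`_j.
Proof.
case: j => [|[|[|[|[|j]]]]] /=.
- exact: g_QWOA_Search_marked.
- exact: g_QWOA_Search_unmarked.
- exact: g_QWOA_Search_ioffdiag.
- exact: g_QWOA_Search_offdiag.
- exact: g_QWOA_Search_iH_C.
- by rewrite nth_nil; apply: lie_generated0.
Qed.

End Search.

Theorem theorem5 (R : rcfType) (n : nat) (Mk : {set 'I_(2 ^ n)}) :
  (1 <= #|Mk|)%N -> (#|Mk| < 2 ^ n)%N ->
  real_dim_eq (g_QWOA_Search R n Mk) (if #|Mk| == 1%N then 4%N else 5%N).
Proof.
move=> Mk_gt0 Mk_lt.
have [x Mx] : exists x, x \in Mk by apply/card_gt0P.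
have [z nMz] : exists z, z \notin Mk.
  have /card_gt0P[z] : (0 < #|~: Mk|)%N by move: (cardsC Mk); rewrite card_ord; lia.
  by rewrite inE; exists z.
case: eqP => [Mk1 | Mk_neq1].
  exists (fun j : 'I_4 => (bcmx_basis Mk)`_j); split.
  - by move=> j; apply: g_QWOA_Search_basis.
  - exact: bcmx_basis4_free Mx nMz.
  - by move=> X /g_QWOA_Search_skew; apply: skew_bcmx_span4.
have [y [My nxy]] : exists y, y \in Mk /\ x != y.
  have /card_gt1P[u [v [Mu Mv nuv]]] : (1 < #|Mk|)%N by lia.
  by case: (x =P u) => [-> | /eqP nxu]; [exists v | exists u].
exists (fun j : 'I_5 => (bcmx_basis Mk)`_j); split.
- by move=> j; apply: g_QWOA_Search_basis.
- exact: bcmx_basis5_free Mx My nxy nMz.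
- by move=> X /g_QWOA_Search_skew; apply: skew_bcmx_span5.
Qed.
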